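(* For all $\alpha\in(0,1]$ and $\eta\in(0,\alpha)$ there is a constant $C=C(\alpha,\eta)<\infty$ such that the following holds. Let $(X,\mu)$ be a standard Borel probability space, let $\mathcal{S},\mathcal{T}$ be finite Borel partitions of $X$, and let $I=\mathrm{I}_\mu(\mathcal{S};\mathcal{T})$. Then for every Borel $U\subseteq X$ with $\mu(U)\ge\alpha$ there is a subset $S\subseteq U$ with \[\log|S|\le C(I+1)\quad\text{and}\quad \mu\big(U\cap\mathcal{T}(U\cap\mathcal{S}(S))\big)>\mu(U)-\eta.\]
   Context: $\mathrm{I}_\mu(\mathcal{S};\mathcal{T})=\mathrm{H}_\mu(\mathcal{S})+\mathrm{H}_\mu(\mathcal{T})-\mathrm{H}_\mu(\mathcal{S}\vee\mathcal{T})$ is the mutual information (Shannon entropies of partitions). For a partition $\mathcal{P}$ and a set $A$, $\mathcal{P}(A)$ denotes the union of all cells of $\mathcal{P}$ that meet $A$ (so $\mathcal{P}(x)$ is the cell containing $x$). *)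

From Stdlib Require Import Reals List.
Open Scope R_scope.

Record ProbSpace (X : Type) := {
  meas : (X -> Prop) -> Prop;
  mu : (X -> Prop) -> R;
  meas_full : meas (fun _ => True);
  meas_compl : forall A, meas A -> meas (fun x => ~ A x);
  meas_cunion : forall A : nat -> X -> Prop,
      (forall n, meas (A n)) -> meas (fun x => exists n, A n x);
  mu_nonneg : forall A, meas A -> 0 <= mu A;
  mu_full : mu (fun _ => True) = 1;
  mu_sigma_additive : forall A : nat -> X -> Prop,
      (forall n, meas (A n)) ->
      (forall n m x, A n x -> A m x -> n = m) ->
      infinite_sum (fun n => mu (A n)) (mu (fun x => exists n, A n x))
}.
Arguments meas {X} _ _.
Arguments mu {X} _ _.

(* A finite measurable partition, given by a cell-index function with
   measurable fibres (cells may be empty). *)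
Record FinPartition (X : Type) (P : ProbSpace X) := {
  ncells : nat;
  cell : X -> nat;
  cell_lt : forall x, (cell x < ncells)%nat;
  cell_meas : forall i, meas P (fun x => cell x = i)
}.
Arguments ncells {X P} _.
Arguments cell {X P} _ _.

Definition rsum (n : nat) (f : nat -> R) : R :=
  fold_right Rplus 0 (map f (seq 0 n)).

Definition plogp (p : R) : R := if Req_EM_T p 0 then 0 else p * ln p.

Definition entropy {X} {P : ProbSpace X} (Q : FinPartition X P) : R :=
  - rsum (ncells Q) (fun i => plogp (mu P (fun x => cell Q x = i))).

Definition entropy_join {X} {P : ProbSpace X} (S T : FinPartition X P) : R :=
  - rsum (ncells S) (fun i => rsum (ncells T) (fun j =>
      plogp (mu P (fun x => cell S x = i /\ cell T x = j)))).

Definition mutual_info {X} {P : ProbSpace X} (S T : FinPartition X P) : R :=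
  entropy S + entropy T - entropy_join S T.

(* Q(A): the union of all cells of Q meeting A *)
Definition saturate {X} {P : ProbSpace X} (Q : FinPartition X P)
  (A : X -> Prop) : X -> Prop :=
  fun x => exists y, A y /\ cell Q y = cell Q x.

Definition inter {X} (A B : X -> Prop) : X -> Prop := fun x => A x /\ B x.

(* Write p, q, a for the masses of the cells of S, T and of their join.  The
   mutual information is the sum of the nonnegative terms
   a ln (a / p q) - a + p q, so for every set E of pairs of cells and K >= 1,
   ln K * a(E) <= I + (K - 1) * (p x q)(E).
   Call a T-cell heavy if the S-cells meeting it inside U have total mass at
   least d = exp (-2 (I + 1) / eta).  The bound with K = 1/d shows that the
   light T-cells carry at most eta/2 of the mass of U.  An S-cell drawn with
   law p hits each heavy T-cell with probability at least d, so greedily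
   choosing k ~ ln (2 / eta) / d S-cells leaves at most (1 - d)^k < eta/2 of
   the heavy mass uncovered.  One point of U in each chosen S-cell gives the
   set, of size at most k + 1, whose log is O(I + 1).  The constant does not
   depend on alpha: the hypothesis mu U >= alpha only makes U nonempty. *)

From Stdlib Require Import Reals List Lra Lia ZArith Bool.
From Stdlib Require Import Classical ClassicalEpsilon FunctionalExtensionality PropExtensionality.
Open Scope R_scope.

Arguments meas_full {X} _.
Arguments meas_compl {X} _ _ _.
Arguments meas_cunion {X} _ _ _.
Arguments mu_nonneg {X} _ _ _.
Arguments mu_full {X} _.
Arguments mu_sigma_additive {X} _ _ _ _.
Arguments cell_lt {X P} _ _.
Arguments cell_meas {X P} _ _.

Lemma rsum_S n f : rsum (S n) f = rsum n f + f n.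
Proof.
  unfold rsum; rewrite seq_S, map_app, fold_right_app; simpl.
  generalize (map f (seq 0 n)); intros l.
  induction l as [|a l IH]; simpl; lra.
Qed.

Lemma rsum_ext n f g : (forall i, (i < n)%nat -> f i = g i) -> rsum n f = rsum n g.
Proof.
  induction n as [|n IH]; intros Hfg; [reflexivity|].
  rewrite !rsum_S, (Hfg n) by lia.
  f_equal; apply IH; intros; apply Hfg; lia.
Qed.

Lemma rsum_plus n f g : rsum n (fun i => f i + g i) = rsum n f + rsum n g.
Proof. induction n; [unfold rsum; simpl; lra|]. rewrite !rsum_S, IHn; lra. Qed.

Lemma rsum_minus n f g : rsum n (fun i => f i - g i) = rsum n f - rsum n g.
Proof. induction n; [unfold rsum; simpl; lra|]. rewrite !rsum_S, IHn; lra. Qed.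

Lemma rsum_scal n c f : rsum n (fun i => c * f i) = c * rsum n f.
Proof. induction n; [unfold rsum; simpl; lra|]. rewrite !rsum_S, IHn; lra. Qed.

Lemma rsum_scal_r n f c : rsum n (fun i => f i * c) = rsum n f * c.
Proof. induction n; [unfold rsum; simpl; lra|]. rewrite !rsum_S, IHn; lra. Qed.

Lemma rsum_0 n : rsum n (fun _ => 0) = 0.
Proof. induction n; [reflexivity|]. rewrite rsum_S, IHn; lra. Qed.

Lemma rsum_le n f g : (forall i, (i < n)%nat -> f i <= g i) -> rsum n f <= rsum n g.
Proof.
  induction n as [|n IH]; intros Hfg; [unfold rsum; simpl; lra|].
  rewrite !rsum_S.
  assert (f n <= g n) by (apply Hfg; lia).
  assert (rsum n f <= rsum n g) by (apply IH; intros; apply Hfg; lia).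
  lra.
Qed.

Lemma rsum_nonneg n f : (forall i, (i < n)%nat -> 0 <= f i) -> 0 <= rsum n f.
Proof. intros H. rewrite <- (rsum_0 n). now apply rsum_le. Qed.

Lemma rsum_swap n m f :
  rsum n (fun i => rsum m (fun j => f i j)) = rsum m (fun j => rsum n (fun i => f i j)).
Proof.
  induction n as [|n IH].
  - symmetry; apply rsum_0.
  - rewrite rsum_S, IH, <- rsum_plus.
    apply rsum_ext; intros; now rewrite rsum_S.
Qed.

Lemma exists_argmax n (g : nat -> R) :
  (0 < n)%nat -> exists i, (i < n)%nat /\ forall k, (k < n)%nat -> g k <= g i.
Proof.
  induction n as [|[|n] IH]; intros Hn; [lia| |].
  - exists 0%nat; split; [lia|]; intros k Hk; replace k with 0%nat by lia; lra.
  - destruct IH as [i [Hi Hmax]]; [lia|].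
    destruct (Rle_dec (g (S n)) (g i)).
    + exists i; split; [lia|]; intros k Hk.
      destruct (Nat.eq_dec k (S n)); [subst; auto | apply Hmax; lia].
    + exists (S n); split; [lia|]; intros k Hk.
      destruct (Nat.eq_dec k (S n)); [subst; lra|].
      specialize (Hmax k ltac:(lia)); lra.
Qed.

Section Measure.
Context {X : Type} (P : ProbSpace X).

Lemma pred_ext (A B : X -> Prop) : (forall x, A x <-> B x) -> A = B.
Proof.
  intros H; apply functional_extensionality; intros x.
  now apply propositional_extensionality.
Qed.

Lemma meas_ext A B : (forall x, A x <-> B x) -> meas P A -> meas P B.
Proof. intros H; now rewrite (pred_ext A B H). Qed.

Lemma mu_ext A B : (forall x, A x <-> B x) -> mu P A = mu P B.
Proof. intros H; now rewrite (pred_ext A B H). Qed.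

Lemma meas_empty : meas P (fun _ => False).
Proof. apply (meas_ext (fun x => ~ True)); [tauto| apply meas_compl, meas_full]. Qed.

(* Countable additivity for the constant sequence of empty sets forces
   [(N + 1) * mu(empty) -> mu(empty)]. *)
Lemma mu_empty : mu P (fun _ => False) = 0.
Proof.
  set (e := mu P (fun _ => False)).
  assert (He : 0 <= e) by apply mu_nonneg, meas_empty.
  pose proof (mu_sigma_additive P (fun _ _ => False) (fun _ => meas_empty)
    ltac:(intros; contradiction)) as Hsum.
  rewrite (mu_ext _ (fun _ => False)) in Hsum by firstorder.
  fold e in Hsum.
  assert (Hpartial : forall N, sum_f_R0 (fun _ => e) N = INR (S N) * e).
  { induction N; simpl sum_f_R0; [simpl; lra|]. rewrite IHN, (S_INR (S N)); lra. }
  destruct (Rle_lt_or_eq_dec 0 e He) as [Hpos|]; [exfalso|auto].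
  destruct (Hsum e Hpos) as [N HN]. specialize (HN (S (S N)) ltac:(lia)).
  unfold Rdist in HN; rewrite Hpartial, !S_INR in HN.
  pose proof (pos_INR N).
  rewrite Rabs_right in HN by nra; nra.
Qed.

Lemma meas_and A B : meas P A -> meas P B -> meas P (fun x => A x /\ B x).
Proof.
  intros HA HB.
  apply (meas_ext (fun x => ~ exists n : nat, if Nat.eq_dec n 0 then ~ A x else ~ B x)).
  - intros x; split.
    + intros H; split; apply NNPP; intros Hn; apply H;
        [exists 0%nat | exists 1%nat]; simpl; auto.
    + intros [HAx HBx] [n Hn]; destruct (Nat.eq_dec n 0); auto.
  - apply meas_compl, meas_cunion; intros n.
    destruct (Nat.eq_dec n 0); now apply meas_compl.
Qed.

Lemma meas_const_and (Q : Prop) A : meas P A -> meas P (fun x => Q /\ A x).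
Proof.
  intros HA; destruct (classic Q).
  - apply (meas_ext A); [firstorder | auto].
  - apply (meas_ext (fun _ => False)); [firstorder | apply meas_empty].
Qed.

Lemma mu_disjoint_union A B : meas P A -> meas P B -> (forall x, A x -> B x -> False) ->
  mu P (fun x => A x \/ B x) = mu P A + mu P B.
Proof.
  intros HA HB Hdisj.
  set (F := fun n x => match n with 0%nat => A x | 1%nat => B x | _ => False end).
  assert (HF : forall n, meas P (F n)) by (intros [|[|n]]; simpl; auto using meas_empty).
  assert (HFdisj : forall n m x, F n x -> F m x -> n = m).
  { intros [|[|n]] [|[|m]] x; simpl; try tauto; intros; exfalso; eauto. }
  pose proof (mu_sigma_additive P F HF HFdisj) as Hsum.
  rewrite (mu_ext _ (fun x => A x \/ B x)) in Hsum.
  2:{ intros x; split; [intros [[|[|n]] Hn]; simpl in Hn; tauto|].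
      intros [Hx|Hx]; [exists 0%nat | exists 1%nat]; auto. }
  apply (uniqueness_sum _ _ _ Hsum).
  intros eps Heps; exists 1%nat; intros n Hn.
  assert (Hpartial : sum_f_R0 (fun n => mu P (F n)) n = mu P A + mu P B).
  { induction n as [|[|n] IH]; [lia | reflexivity |].
    simpl sum_f_R0 in IH |- *. rewrite IH by lia.
    replace (mu P (F (S (S n)))) with 0 by (symmetry; apply mu_empty); lra. }
  unfold Rdist; rewrite Hpartial, Rminus_diag, Rabs_R0; auto.
Qed.

Lemma mu_mono A B : meas P A -> meas P B -> (forall x, A x -> B x) -> mu P A <= mu P B.
Proof.
  intros HA HB HAB.
  assert (HBD : meas P (fun x => B x /\ ~ A x)) by (apply meas_and, meas_compl; auto).
  rewrite (mu_ext B (fun x => A x \/ (B x /\ ~ A x))).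
  - rewrite mu_disjoint_union by (auto; tauto).
    pose proof (mu_nonneg P _ HBD); lra.
  - intros x; split; [|firstorder]; intros; destruct (classic (A x)); tauto.
Qed.

Lemma mu_le_1 A : meas P A -> mu P A <= 1.
Proof. intros HA; rewrite <- (mu_full P); apply mu_mono; auto using meas_full. Qed.

Lemma mu_pos_inhabited A : 0 < mu P A -> exists x, A x.
Proof.
  intros Hpos; apply NNPP; intros Hempty.
  rewrite (mu_ext _ (fun _ => False)), mu_empty in Hpos by firstorder; lra.
Qed.

Lemma meas_finunion (F : nat -> X -> Prop) n :
  (forall k, meas P (F k)) -> meas P (fun x => exists k, (k < n)%nat /\ F k x).
Proof. intros HF; apply meas_cunion; intros k; now apply meas_const_and. Qed.

Lemma mu_finunion (F : nat -> X -> Prop) n :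
  (forall k, meas P (F k)) -> (forall k l x, F k x -> F l x -> k = l) ->
  mu P (fun x => exists k, (k < n)%nat /\ F k x) = rsum n (fun k => mu P (F k)).
Proof.
  intros HF Hdisj; induction n as [|n IH].
  - unfold rsum; simpl; rewrite <- mu_empty; apply mu_ext; intros x; split; [intros [k [Hk _]]; lia | tauto].
  - rewrite rsum_S, <- IH, <- mu_disjoint_union; auto using meas_finunion.
    + apply mu_ext; intros x; split.
      * intros [k [Hk Fk]]; destruct (Nat.eq_dec k n); [subst; auto|].
        left; exists k; split; auto; lia.
      * intros [[k [Hk Fk]]|Fn]; [exists k | exists n]; split; auto; lia.
    + intros x [k [Hk Fk]] Fn; specialize (Hdisj _ _ _ Fk Fn); lia.
Qed.

End Measure.

Definition cell_mass {X} {P : ProbSpace X} (Q : FinPartition X P) i : R :=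
  mu P (fun x => cell Q x = i).

Definition joint_mass {X} {P : ProbSpace X} (S T : FinPartition X P) i j : R :=
  mu P (fun x => cell S x = i /\ cell T x = j).

Section Partitions.
Context {X : Type} {P : ProbSpace X}.
Implicit Types Q S T : FinPartition X P.

Lemma meas_and_cell Q A i : meas P A -> meas P (fun x => A x /\ cell Q x = i).
Proof. intros HA; apply meas_and; auto using cell_meas. Qed.

Lemma mu_split Q A : meas P A ->
  mu P A = rsum (ncells Q) (fun i => mu P (fun x => A x /\ cell Q x = i)).
Proof.
  intros HA; rewrite <- mu_finunion.
  - apply mu_ext; intros x; split.
    + intros Ax; exists (cell Q x); auto using cell_lt.
    + intros [k [_ [Ax _]]]; auto.
  - intros k; auto using meas_and_cell.
  - intros k l x [_ Hk] [_ Hl]; congruence.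
Qed.

Lemma meas_saturate Q V : meas P (saturate Q V).
Proof.
  apply (meas_ext P (fun x => exists k, (k < ncells Q)%nat /\
           ((exists y, V y /\ cell Q y = k) /\ cell Q x = k))).
  - intros x; split.
    + intros [k [_ [[y [Vy Hy]] Hx]]]; exists y; split; congruence.
    + intros [y [Vy Hy]]; exists (cell Q x); split; [apply cell_lt|].
      split; auto; exists y; auto.
  - apply meas_finunion; intros k; apply meas_const_and, cell_meas.
Qed.

Lemma cell_mass_nonneg Q i : 0 <= cell_mass Q i.
Proof. apply mu_nonneg, cell_meas. Qed.

Lemma sum_cell_mass Q : rsum (ncells Q) (cell_mass Q) = 1.
Proof.
  rewrite <- (mu_full P), (mu_split Q) by apply meas_full.
  apply rsum_ext; intros; apply mu_ext; tauto.
Qed.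

Lemma sum_joint_mass_r S T i : rsum (ncells T) (joint_mass S T i) = cell_mass S i.
Proof. unfold cell_mass; now rewrite (mu_split T) by apply cell_meas. Qed.

Lemma sum_joint_mass_l S T j :
  rsum (ncells S) (fun i => joint_mass S T i j) = cell_mass T j.
Proof.
  unfold cell_mass; rewrite (mu_split S) by apply cell_meas.
  apply rsum_ext; intros; apply mu_ext; tauto.
Qed.

Lemma meas_joint_cell S T i j : meas P (fun x => cell S x = i /\ cell T x = j).
Proof. apply meas_and; apply cell_meas. Qed.

Lemma joint_mass_nonneg S T i j : 0 <= joint_mass S T i j.
Proof. apply mu_nonneg, meas_joint_cell. Qed.

Lemma joint_mass_le_l S T i j : joint_mass S T i j <= cell_mass S i.
Proof. apply mu_mono; [apply meas_joint_cell | apply cell_meas | tauto]. Qed.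

Lemma joint_mass_le_r S T i j : joint_mass S T i j <= cell_mass T j.
Proof. apply mu_mono; [apply meas_joint_cell | apply cell_meas | tauto]. Qed.

End Partitions.

Lemma plogp_eq x : plogp x = x * ln x.
Proof. unfold plogp; destruct (Req_EM_T x 0); subst; lra. Qed.

Lemma ln_le x y : 0 < x -> x <= y -> ln x <= ln y.
Proof. intros Hx [Hxy | ->]; [left; now apply ln_increasing | lra]. Qed.

Lemma ln_le_sub_1 t : 0 < t -> ln t <= t - 1.
Proof. intros Ht; pose proof (exp_ineq1_le (ln t)); rewrite exp_ln in *; lra. Qed.

(* [ln t <= t - 1] at [t = c p q / a]. *)
Lemma plogp_lower_bound a p q c : 0 <= a -> a <= p -> a <= q -> 0 < c ->
  a * ln c <= plogp a - a * ln p - a * ln q - a + c * (p * q).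
Proof.
  intros Ha Hp Hq Hc; rewrite plogp_eq.
  destruct (Rle_lt_or_eq_dec 0 a Ha) as [Ha' | <-].
  2:{ assert (0 <= c * (p * q)) by (apply Rmult_le_pos; [lra | apply Rmult_le_pos; lra]).
      lra. }
  pose proof (ln_le_sub_1 (c * (p * q) / a)
    ltac:(apply Rdiv_lt_0_compat; [apply Rmult_lt_0_compat; nra | lra])) as Hln.
  unfold Rdiv in Hln.
  rewrite !ln_mult, ln_Rinv in Hln
    by (repeat apply Rmult_lt_0_compat; try apply Rinv_0_lt_compat; lra).
  apply Rmult_le_compat_l with (r := a) in Hln; [| lra].
  replace (a * (c * (p * q) * / a - 1)) with (c * (p * q) - a) in Hln by (field; lra).
  lra.
Qed.

Section MutualInformation.
Context {X : Type} {P : ProbSpace X} (S T : FinPartition X P).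

Let p := cell_mass S.
Let q := cell_mass T.
Let a := joint_mass S T.

(* Each summand is nonnegative by [plogp_lower_bound] with [c = 1]. *)
Lemma mutual_info_as_sum : mutual_info S T =
  rsum (ncells S) (fun i => rsum (ncells T) (fun j =>
    plogp (a i j) - a i j * ln (p i) - a i j * ln (q j) - a i j + p i * q j)).
Proof.
  rewrite (rsum_ext _ _ (fun i => rsum (ncells T) (fun j => plogp (a i j))
            - p i * ln (p i) - rsum (ncells T) (fun j => a i j * ln (q j)))).
  2:{ intros i _. rewrite rsum_plus, !rsum_minus, !rsum_scal, rsum_scal_r.
      subst a p q. rewrite sum_joint_mass_r, sum_cell_mass. ring. }
  rewrite !rsum_minus, (rsum_swap _ _ (fun i j => a i j * ln (q j))).
  rewrite (rsum_ext (ncells T) _ (fun j => q j * ln (q j)))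
    by (intros; rewrite rsum_scal_r; subst a q; now rewrite sum_joint_mass_l).
  unfold mutual_info, entropy, entropy_join.
  rewrite (rsum_ext (ncells S) (fun i => plogp _) (fun i => p i * ln (p i)))
    by (intros; apply plogp_eq).
  rewrite (rsum_ext (ncells T) (fun j => plogp _) (fun j => q j * ln (q j)))
    by (intros; apply plogp_eq).
  subst a p q; unfold cell_mass, joint_mass; ring.
Qed.

Lemma mutual_info_large_deviation (E : nat -> nat -> bool) (K : R) : 1 <= K ->
  ln K * rsum (ncells S) (fun i => rsum (ncells T) (fun j =>
                            if E i j then a i j else 0))
  <= mutual_info S T + (K - 1) * rsum (ncells S) (fun i => rsum (ncells T) (fun j =>
                            if E i j then p i * q j else 0)).
Proof.
  intros HK.
  rewrite mutual_info_as_sum, <- !rsum_scal, <- rsum_plus.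
  apply rsum_le; intros i _.
  rewrite <- !rsum_scal, <- rsum_plus.
  apply rsum_le; intros j _.
  pose proof (joint_mass_nonneg S T i j); pose proof (joint_mass_le_l S T i j);
    pose proof (joint_mass_le_r S T i j).
  destruct (E i j).
  - pose proof (plogp_lower_bound (a i j) (p i) (q j) K ltac:(auto) ltac:(auto) ltac:(auto) ltac:(lra)).
    lra.
  - pose proof (plogp_lower_bound (a i j) (p i) (q j) 1 ltac:(auto) ltac:(auto) ltac:(auto) ltac:(lra)).
    rewrite ln_1 in *; lra.
Qed.

Lemma mutual_info_nonneg : 0 <= mutual_info S T.
Proof.
  pose proof (mutual_info_large_deviation (fun _ _ => false) 1 ltac:(lra)) as H.
  rewrite ln_1 in H; lra.
Qed.

End MutualInformation.

Section Covering.
Context {X : Type} {P : ProbSpace X} (S T : FinPartition X P) (U : X -> Prop).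
Hypothesis HU : meas P U.

Definition U_joint_mass i j : R := mu P (fun x => U x /\ cell S x = i /\ cell T x = j).
Definition U_cell_mass j : R := mu P (fun x => U x /\ cell T x = j).
Definition hits i j : bool := if Rlt_dec 0 (U_joint_mass i j) then true else false.
Definition hit_weight j : R :=
  rsum (ncells S) (fun i => if hits i j then cell_mass S i else 0).
Definition heavy d j : bool := if Rle_dec d (hit_weight j) then true else false.
Definition covered (A : list nat) j : bool := existsb (fun i => hits i j) A.

Definition light_mass d : R :=
  rsum (ncells T) (fun j => if heavy d j then 0 else U_cell_mass j).
Definition uncovered_heavy_mass d A : R :=
  rsum (ncells T) (fun j => if heavy d j && negb (covered A j) then U_cell_mass j else 0).
Definition gain d A i : R :=
  rsum (ncells T) (fun j =>
    if heavy d j && negb (covered A j) && hits i j then U_cell_mass j else 0).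

Lemma U_cell_mass_nonneg j : 0 <= U_cell_mass j.
Proof. apply mu_nonneg, meas_and_cell, HU. Qed.

Lemma sum_U_cell_mass : rsum (ncells T) U_cell_mass = mu P U.
Proof. now rewrite (mu_split T U HU). Qed.

Lemma sum_U_joint_mass j : rsum (ncells S) (fun i => U_joint_mass i j) = U_cell_mass j.
Proof.
  unfold U_cell_mass; rewrite (mu_split S) by apply meas_and_cell, HU.
  apply rsum_ext; intros; apply mu_ext; tauto.
Qed.

Lemma U_joint_mass_le i j : U_joint_mass i j <= if hits i j then joint_mass S T i j else 0.
Proof.
  unfold hits; destruct (Rlt_dec 0 (U_joint_mass i j)); [| lra].
  apply mu_mono; [| apply meas_joint_cell | tauto].
  apply meas_and; auto using meas_joint_cell.
Qed.

Lemma hits_witness i j : hits i j = true -> exists y, U y /\ cell S y = i /\ cell T y = j.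
Proof.
  unfold hits; destruct (Rlt_dec 0 (U_joint_mass i j)) as [Hpos|]; [| discriminate].
  intros _; exact (mu_pos_inhabited P _ Hpos).
Qed.

(* The large-deviation bound with [K = 1/d] on the pairs (S-cell, light T-cell)
   hit inside [U]: their product mass is below [d] since the T-cell is light. *)
Lemma light_mass_bound d : 0 < d <= 1 -> ln (/ d) * light_mass d <= mutual_info S T + 1.
Proof.
  intros Hd.
  set (E := fun i j => negb (heavy d j) && hits i j).
  assert (HK : 1 <= / d) by (rewrite <- Rinv_1; apply Rinv_le_contravar; lra).
  pose proof (mutual_info_large_deviation S T E (/ d) HK) as Hdev.
  assert (Hln : 0 <= ln (/ d)) by (rewrite <- ln_1; apply ln_le; lra).
  assert (Hlight : light_mass d <= rsum (ncells S) (fun i => rsum (ncells T) (fun j =>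
                     if E i j then joint_mass S T i j else 0))).
  { rewrite rsum_swap; apply rsum_le; intros j _; unfold E.
    destruct (heavy d j); simpl.
    - apply rsum_nonneg; intros; lra.
    - rewrite <- sum_U_joint_mass; apply rsum_le; intros i _; apply U_joint_mass_le. }
  assert (Hprod : rsum (ncells S) (fun i => rsum (ncells T) (fun j =>
                    if E i j then cell_mass S i * cell_mass T j else 0)) <= d).
  { rewrite rsum_swap, <- (Rmult_1_r d), <- (sum_cell_mass T), <- rsum_scal.
    apply rsum_le; intros j _; unfold E.
    pose proof (cell_mass_nonneg T j).
    destruct (heavy d j) eqn:Hheavy; simpl.
    - rewrite rsum_0; nra.
    - unfold heavy in Hheavy; destruct (Rle_dec d (hit_weight j)) as [|Hw]; [discriminate|].
      rewrite (rsum_ext _ _ (fun i => (if hits i j then cell_mass S i else 0) * cell_mass T j))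
        by (intros; destruct (hits i j); ring).
      rewrite rsum_scal_r; fold (hit_weight j); nra. }
  assert (Hcost : (/ d - 1) * rsum (ncells S) (fun i => rsum (ncells T) (fun j =>
                    if E i j then cell_mass S i * cell_mass T j else 0)) <= 1).
  { apply Rle_trans with ((/ d - 1) * d); [apply Rmult_le_compat_l; lra |].
    field_simplify; lra. }
  pose proof (Rmult_le_compat_l _ _ _ Hln Hlight); lra.
Qed.

Lemma uncovered_heavy_mass_cons d A i :
  uncovered_heavy_mass d (i :: A) = uncovered_heavy_mass d A - gain d A i.
Proof.
  unfold uncovered_heavy_mass, gain; rewrite <- rsum_minus.
  apply rsum_ext; intros j _; unfold covered; simpl; fold (covered A j).
  destruct (heavy d j), (hits i j), (covered A j); simpl; ring.
Qed.

(* An S-cell drawn with law [cell_mass S] hits each uncovered heavy T-cell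
   with probability at least [d]. *)
Lemma average_gain d A :
  d * uncovered_heavy_mass d A <= rsum (ncells S) (fun i => cell_mass S i * gain d A i).
Proof.
  erewrite rsum_ext by (intros i _; unfold gain; rewrite <- rsum_scal; reflexivity).
  rewrite rsum_swap; unfold uncovered_heavy_mass; rewrite <- rsum_scal.
  apply rsum_le; intros j _.
  destruct (heavy d j && negb (covered A j)) eqn:Hj; simpl.
  - apply andb_prop in Hj as [Hheavy _].
    unfold heavy in Hheavy; destruct (Rle_dec d (hit_weight j)) as [Hw|]; [|discriminate].
    rewrite (rsum_ext _ _ (fun i => (if hits i j then cell_mass S i else 0) * U_cell_mass j))
      by (intros; destruct (hits i j); ring).
    rewrite rsum_scal_r; fold (hit_weight j).
    pose proof (U_cell_mass_nonneg j); nra.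
  - rewrite (rsum_ext _ _ (fun _ => 0)) by (intros; ring).
    rewrite rsum_0; lra.
Qed.

Lemma greedy_step d A : 0 < d ->
  exists i, uncovered_heavy_mass d (i :: A) <= (1 - d) * uncovered_heavy_mass d A.
Proof.
  intros Hd.
  assert (HS : (0 < ncells S)%nat).
  { pose proof (sum_cell_mass S) as Hsum.
    destruct (ncells S); [unfold rsum in Hsum; simpl in Hsum; lra | lia]. }
  destruct (exists_argmax (ncells S) (gain d A) HS) as [i0 [_ Hmax]].
  exists i0; rewrite uncovered_heavy_mass_cons.
  assert (rsum (ncells S) (fun i => cell_mass S i * gain d A i) <= gain d A i0).
  { rewrite <- (Rmult_1_l (gain d A i0)), <- (sum_cell_mass S), <- rsum_scal_r.
    apply rsum_le; intros i Hi; apply Rmult_le_compat_l; auto using cell_mass_nonneg. }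
  pose proof (average_gain d A); lra.
Qed.

Lemma greedy_cover d : 0 < d <= 1 ->
  forall k, exists A, length A = k /\ uncovered_heavy_mass d A <= (1 - d) ^ k.
Proof.
  intros Hd k; induction k as [|k [A [HA Hmass]]].
  - exists nil; split; auto; simpl.
    apply Rle_trans with (rsum (ncells T) U_cell_mass).
    + apply rsum_le; intros j _; destruct (_ && _); [lra | apply U_cell_mass_nonneg].
    + rewrite sum_U_cell_mass; now apply mu_le_1.
  - destruct (greedy_step d A ltac:(lra)) as [i Hi].
    exists (i :: A); split; simpl; [lia|].
    apply Rle_trans with ((1 - d) * uncovered_heavy_mass d A); auto.
    apply Rmult_le_compat_l; lra.
Qed.

Definition target (s : list X) : X -> Prop :=
  inter U (saturate T (inter U (saturate S (fun y => In y s)))).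

(* One point of [U] in each chosen S-cell meeting [U]; [x0] keeps the list
   nonempty and is the junk choice for the other cells. *)
Lemma covering_points (A : list nat) x0 : U x0 ->
  exists s : list X, NoDup s /\ (0 < length s)%nat /\ (length s <= 1 + length A)%nat /\
    (forall x, In x s -> U x) /\
    (forall j, covered A j = true -> forall x, U x -> cell T x = j -> target s x).
Proof.
  intros Hx0.
  set (pick := fun i => epsilon (inhabits x0)
                 (fun x => U x /\ ((exists y, U y /\ cell S y = i) -> cell S x = i))).
  assert (Hpick : forall i, U (pick i) /\
                   ((exists y, U y /\ cell S y = i) -> cell S (pick i) = i)).
  { intros i; apply epsilon_spec.
    destruct (classic (exists y, U y /\ cell S y = i)) as [[y Hy]|Hnone].
    - exists y; split; [tauto | intros _; tauto].
    - exists x0; split; [auto | tauto]. }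
  set (l := x0 :: map pick A).
  assert (Hl : forall x, In x l -> U x).
  { intros x [<- | Hx]; auto. apply in_map_iff in Hx as [i [<- _]]; apply Hpick. }
  exists (nodup (fun x y => excluded_middle_informative (x = y)) l).
  split; [| split; [| split; [| split]]].
  - apply NoDup_nodup.
  - assert (Hin : In x0 (nodup (fun x y => excluded_middle_informative (x = y)) l))
      by (apply nodup_In; now left).
    destruct (nodup _ l); [contradiction | simpl; lia].
  - apply Nat.le_trans with (length l); [| simpl; rewrite length_map; lia].
    apply NoDup_incl_length; [apply NoDup_nodup | intros x; apply nodup_In].
  - intros x Hx; apply Hl, (nodup_In (fun x y => excluded_middle_informative (x = y))), Hx.
  - intros j Hcov x Ux Hxj; split; auto.
    unfold covered in Hcov; apply existsb_exists in Hcov as [i [HiA Hhit]].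
    destruct (hits_witness i j Hhit) as [y [Uy [Syi Tyj]]].
    exists y; split; [split; auto | congruence].
    exists (pick i); split.
    + apply nodup_In; right; now apply in_map.
    + rewrite Syi; apply (proj2 (Hpick i)); eauto.
Qed.

Lemma target_mass_lower_bound d A s :
  (forall j, covered A j = true -> forall x, U x -> cell T x = j -> target s x) ->
  mu P U - uncovered_heavy_mass d A - light_mass d <= mu P (target s).
Proof.
  intros Hcov.
  set (W := fun x => exists j, (j < ncells T)%nat /\
              (covered A j = true /\ (U x /\ cell T x = j))).
  assert (HWmeas : meas P W)
    by (apply meas_finunion; intros j; apply meas_const_and, meas_and_cell, HU).
  assert (HW : mu P W = rsum (ncells T) (fun j => if covered A j then U_cell_mass j else 0)).
  { unfold W; rewrite mu_finunion.
    - apply rsum_ext; intros j _; destruct (covered A j).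
      + apply mu_ext; intuition.
      + rewrite (mu_ext P _ (fun _ => False)) by (intuition discriminate); apply mu_empty.
    - intros j; apply meas_const_and, meas_and_cell, HU.
    - intros j j' x [_ [_ Hj]] [_ [_ Hj']]; congruence. }
  assert (HWtarget : mu P W <= mu P (target s)).
  { apply mu_mono; auto.
    - apply meas_and; auto using meas_saturate.
    - intros x [j [_ [Hc [Ux Hx]]]]; eapply Hcov; eauto. }
  assert (Hsplit : mu P U <= mu P W + uncovered_heavy_mass d A + light_mass d).
  { rewrite HW, <- sum_U_cell_mass; unfold uncovered_heavy_mass, light_mass.
    rewrite <- !rsum_plus; apply rsum_le; intros j _.
    pose proof (U_cell_mass_nonneg j).
    destruct (covered A j), (heavy d j); simpl; lra. }
  lra.
Qed.

Lemma covering_bound L k : 0 < L -> 0 < mu P U ->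
  exists s, NoDup s /\ (0 < length s)%nat /\ (length s <= 1 + k)%nat /\
    (forall x, In x s -> U x) /\
    mu P U - (1 - exp (- L)) ^ k - (mutual_info S T + 1) / L <= mu P (target s).
Proof.
  intros HL HUpos.
  set (d := exp (- L)).
  assert (Hd : 0 < d < 1)
    by (split; [apply exp_pos | rewrite <- exp_0; apply exp_increasing; lra]).
  destruct (greedy_cover d ltac:(lra) k) as [A [HA Huncov]].
  destruct (mu_pos_inhabited P U HUpos) as [x0 Hx0].
  destruct (covering_points A x0 Hx0) as [s [Hnd [Hpos [Hlen [HsU Hcov]]]]].
  exists s; do 4 (split; [auto; lia |]).
  pose proof (target_mass_lower_bound d A s Hcov).
  pose proof (light_mass_bound d ltac:(lra)) as Hlight.
  replace (ln (/ d)) with L in Hlight by (unfold d; now rewrite exp_Ropp, Rinv_inv, ln_exp).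
  assert (light_mass d <= (mutual_info S T + 1) / L)
    by (apply Rmult_le_reg_l with L; [| replace (L * (_ / L)) with (mutual_info S T + 1)
                                          by (field; lra)]; lra).
  lra.
Qed.

End Covering.

Lemma pow_one_minus_le_exp d k : 0 <= d <= 1 -> (1 - d) ^ k <= exp (- (INR k * d)).
Proof.
  intros Hd; induction k as [|k IH]; [simpl; rewrite Rmult_0_l, Ropp_0, exp_0; lra|].
  rewrite S_INR, <- tech_pow_Rmult.
  replace (- ((INR k + 1) * d)) with (- d + - (INR k * d)) by ring.
  rewrite exp_plus.
  pose proof (exp_ineq1_le (- d)).
  apply Rmult_le_compat; [lra | apply pow_le; lra | lra | exact IH].
Qed.

Lemma pow_one_minus_exp_lt c L (k : nat) : 0 < L -> c * exp L < INR k ->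
  (1 - exp (- L)) ^ k < exp (- c).
Proof.
  intros HL Hk.
  assert (Hd : 0 < exp (- L) <= 1)
    by (split; [apply exp_pos | left; rewrite <- exp_0; apply exp_increasing; lra]).
  eapply Rle_lt_trans; [apply pow_one_minus_le_exp; lra |].
  apply exp_increasing, Ropp_lt_contravar.
  apply Rmult_lt_compat_r with (r := exp (- L)) in Hk; [| lra].
  rewrite Rmult_assoc, <- exp_plus, Rplus_opp_r, exp_0, Rmult_1_r in Hk; exact Hk.
Qed.

Lemma exists_nat_between x : 0 <= x -> exists k : nat, x < INR k <= x + 1.
Proof.
  intros Hx; destruct (archimed x) as [Hgt Hle].
  exists (Z.to_nat (up x)).
  rewrite INR_IZR_INZ, Z2Nat.id by (apply le_IZR; lra); lra.
Qed.

Lemma ln_card_bound (n k : nat) c L : (0 < n)%nat -> (n <= 1 + k)%nat ->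
  0 <= c -> 0 <= L -> INR k <= c * exp L + 1 -> ln (INR n) <= ln (c + 2) + L.
Proof.
  intros Hn Hnk Hc HL Hk.
  assert (Hexp : 1 <= exp L) by (pose proof (exp_ineq1_le L); lra).
  apply le_INR in Hnk; rewrite plus_INR in Hnk; simpl in Hnk.
  rewrite <- (ln_exp L), <- ln_mult by (try apply exp_pos; lra).
  apply ln_le; [apply lt_0_INR; lia | nra].
Qed.

Theorem mainTheorem10 :
  forall alpha eta : R, 0 < alpha <= 1 -> 0 < eta < alpha ->
  exists C : R,
  forall (X : Type) (P : ProbSpace X) (S T : FinPartition X P) (U : X -> Prop),
    meas P U -> alpha <= mu P U ->
    exists s : list X,
      NoDup s /\ (0 < length s)%nat /\ (forall x, In x s -> U x) /\
      ln (INR (length s)) <= C * (mutual_info S T + 1) /\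
      mu P (inter U (saturate T (inter U (saturate S (fun y => In y s)))))
        > mu P U - eta.
Proof.
  intros alpha eta Halpha Heta.
  set (c := ln (2 / eta)).
  assert (Hc : 0 < c) by (unfold c; rewrite <- ln_1; apply ln_increasing;
    [lra | apply Rmult_lt_reg_r with eta; [lra | unfold Rdiv; rewrite Rmult_assoc, Rinv_l; lra]]).
  assert (Hlnc : 0 <= ln (c + 2)) by (rewrite <- ln_1; apply ln_le; lra).
  exists (ln (c + 2) + 2 / eta).
  intros X P S T U HU HUalpha.
  set (I := mutual_info S T).
  pose proof (mutual_info_nonneg S T) as HI; fold I in HI.
  set (L := 2 * (I + 1) / eta).
  assert (HL : 0 < L) by (unfold L; apply Rdiv_lt_0_compat; lra).
  destruct (exists_nat_between (c * exp L)) as [k Hk];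
    [pose proof (exp_pos L); nra|].
  destruct (covering_bound S T U HU L k HL ltac:(lra))
    as [s [Hnd [Hpos [Hlen [HsU Hmass]]]]].
  exists s; do 3 (split; [auto |]); split.
  - pose proof (ln_card_bound (length s) k c L Hpos Hlen ltac:(lra) ltac:(lra) ltac:(lra)).
    replace ((ln (c + 2) + 2 / eta) * (I + 1)) with (ln (c + 2) * (I + 1) + L)
      by (unfold L; field; lra).
    nra.
  - pose proof (pow_one_minus_exp_lt c L k ltac:(lra) ltac:(lra)) as Hsmall.
    replace (exp (- c)) with (eta / 2) in Hsmall
      by (unfold c; rewrite exp_Ropp, exp_ln by (apply Rdiv_lt_0_compat; lra); field; lra).
    fold I in Hmass; replace ((I + 1) / L) with (eta / 2) in Hmass by (unfold L; field; lra).
    unfold target in Hmass; lra.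
Qed.
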